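(* For integers $n,m$, the inequality \[ \sin(\pi/m)\,\cosh\!\left(\operatorname{arccosh}\!\left(\frac{\cos(\pi/m)}{\sin(\pi/n)}\right)+\operatorname{arccosh}\bigl(\cot(\pi/m)\cot(\pi/n)\bigr)\right) > \cosh(\log n) \] holds whenever $n\ge 5, m\ge 6$; or $n\ge 7, m\ge 4$. *)

From Stdlib Require Export Reals.
Open Scope R_scope.

Definition arccosh (x : R) : R := ln (x + sqrt (x ^ 2 - 1)).

Definition cot (x : R) : R := cos x / sin x.

(** With a = π/m and b = π/n, the three arccosh/cot expressions collapse: the
    sines of the two arccosh terms are both multiples of sqrt (cos² a - sin² b),
    and the left-hand side equals cos² a / (1 - cos b) - 1 exactly.  Since
    cosh (log n) = (n + 1/n) / 2, the claim becomes
    (1 - cos (π/n)) (n + 1)² < 2 n cos² (π/m), which follows from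
    1 - cos x <= x² / 2, π < 16/5 and cos² (π/m) >= 3/4 (m >= 6), resp.
    >= 1/2 (m >= 4). *)

From Stdlib Require Import Reals Lra.
Open Scope R_scope.

Lemma exp_arccosh x : 1 <= x -> exp (arccosh x) = x + sqrt (x ^ 2 - 1).
Proof.
intros hx. unfold arccosh. apply exp_ln.
pose proof (sqrt_pos (x ^ 2 - 1)). lra.
Qed.

Lemma exp_opp_arccosh x : 1 <= x -> exp (- arccosh x) = x - sqrt (x ^ 2 - 1).
Proof.
intros hx. rewrite exp_Ropp, exp_arccosh by exact hx.
assert (hsq : sqrt (x ^ 2 - 1) * sqrt (x ^ 2 - 1) = x ^ 2 - 1)
  by (apply sqrt_sqrt; nra).
pose proof (sqrt_pos (x ^ 2 - 1)).
field_simplify_eq; [nra | lra].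
Qed.

Lemma cosh_arccosh_add x y : 1 <= x -> 1 <= y ->
  cosh (arccosh x + arccosh y) = x * y + sqrt (x ^ 2 - 1) * sqrt (y ^ 2 - 1).
Proof.
intros hx hy. unfold cosh.
rewrite Ropp_plus_distr, !exp_plus, exp_arccosh, exp_arccosh,
  exp_opp_arccosh, exp_opp_arccosh by assumption.
field.
Qed.

Lemma cosh_ln x : 0 < x -> cosh (ln x) = (x + / x) / 2.
Proof. intros hx. unfold cosh. now rewrite exp_Ropp, exp_ln. Qed.

Lemma sqrt_sqr_div_sub_one u v : 0 < v ->
  sqrt ((u / v) ^ 2 - 1) = sqrt (u ^ 2 - v ^ 2) / v.
Proof.
intros hv.
replace ((u / v) ^ 2 - 1) with ((u ^ 2 - v ^ 2) / v ^ 2) by (field; lra).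
rewrite sqrt_div_alt, sqrt_pow2 by (lra || nra). reflexivity.
Qed.

(* Both sinh (arccosh _) factors are multiples of sqrt (cos² a - sin² b), since
   cos² a cos² b - sin² a sin² b = cos² a - sin² b. *)
Lemma sin_mul_cosh_arccosh_add a b : 0 < a -> 0 < b -> a + b <= PI / 2 ->
  sin a * cosh (arccosh (cos a / sin b) + arccosh (cot a * cot b))
  = cos a ^ 2 / (1 - cos b) - 1.
Proof.
intros ha hb hab. pose proof PI_RGT_0.
assert (hsa : 0 < sin a) by (apply sin_gt_0; lra).
assert (hsb : 0 < sin b) by (apply sin_gt_0; lra).
assert (hcb0 : 0 < cos b) by (apply cos_gt_0; lra).
assert (hcb1 : cos b < 1)
  by (pose proof (sin2_cos2 b); unfold Rsqr in *; nra).
assert (hsb_ca : sin b <= cos a).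
{ rewrite <- sin_shift. apply sin_incr_1; lra. }
assert (hcab : sin a * sin b <= cos a * cos b).
{ pose proof (cos_ge_0 (a + b)). rewrite cos_plus in *. lra. }
assert (hX : 1 <= cos a / sin b).
{ apply (Rmult_le_reg_r (sin b)); [lra|]. field_simplify; lra. }
assert (hY : 1 <= cot a * cot b).
{ replace (cot a * cot b) with (cos a * cos b / (sin a * sin b))
    by (unfold cot; field; lra).
  apply (Rmult_le_reg_r (sin a * sin b)); [nra|]. field_simplify; lra. }
rewrite cosh_arccosh_add by assumption.
replace (cot a * cot b) with (cos a * cos b / (sin a * sin b))
  by (unfold cot; field; lra).
rewrite !sqrt_sqr_div_sub_one by nra.
replace ((cos a * cos b) ^ 2 - (sin a * sin b) ^ 2) with (cos a ^ 2 - sin b ^ 2)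
  by (pose proof (sin2_cos2 a); pose proof (sin2_cos2 b); unfold Rsqr in *; nra).
set (K := cos a ^ 2 - sin b ^ 2).
assert (hK : sqrt K * sqrt K = K) by (apply sqrt_sqrt; unfold K; nra).
transitivity ((cos a ^ 2 * cos b + sqrt K * sqrt K) / sin b ^ 2); [field; lra|].
rewrite hK; unfold K.
replace (sin b ^ 2) with ((1 - cos b) * (1 + cos b))
  by (pose proof (sin2_cos2 b); unfold Rsqr in *; nra).
field; split; lra.
Qed.

(* cos (8/5) < 0 already by the degree-8 Taylor upper bound, so π/2 < 8/5. *)
Lemma PI_lt_16_5 : PI < 16 / 5.
Proof.
apply Rnot_le_lt; intros hPI.
assert (hcos : 0 <= cos (8 / 5)) by (apply cos_ge_0; lra).
assert (hub : cos (8 / 5) <= cos_ub (8 / 5)) by (apply COS; lra).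
assert (fact_S : forall k,
          INR (Factorial.fact (S k)) = INR (S k) * INR (Factorial.fact k))
  by (intro k; rewrite <- mult_INR; reflexivity).
unfold cos_ub, cos_approx, cos_term in hub.
cbn [sum_f_R0 Nat.mul Nat.add pow] in hub.
rewrite !fact_S, !S_INR in hub; simpl in hub.
lra.
Qed.

Lemma sin_sqr_le_sqr y : sin y ^ 2 <= y ^ 2.
Proof.
assert (hpos : forall z, 0 < z -> sin z ^ 2 <= z ^ 2).
{ intros z hz. destruct (Rle_or_lt 1 z) as [hz1|hz1].
  - pose proof (SIN_bound z). nra.
  - pose proof PI2_1.
    assert (0 < sin z) by (apply sin_gt_0; lra).
    pose proof (sin_lt_x z hz). nra. }
destruct (Rtotal_order y 0) as [hy|[->|hy]].
- replace y with (- - y) by ring. rewrite sin_neg.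
  specialize (hpos (- y)). lra.
- rewrite sin_0. lra.
- now apply hpos.
Qed.

Lemma one_sub_cos_le_sqr_half x : 1 - cos x <= x ^ 2 / 2.
Proof.
replace x with (2 * (x / 2)) at 1 by field.
rewrite cos_2a_sin.
pose proof (sin_sqr_le_sqr (x / 2)). lra.
Qed.

Lemma PI_div_le k N : 0 < k -> k <= N -> PI / N <= PI / k.
Proof.
intros hk hkN. pose proof PI_RGT_0.
apply Rmult_le_compat_l; [lra|]. now apply Rinv_le_contravar.
Qed.

Lemma one_sub_cos_PI_div_lt N : 0 < N -> 1 - cos (PI / N) < 128 / (25 * N ^ 2).
Proof.
intros hN. pose proof PI_lt_16_5. pose proof PI_RGT_0.
eapply Rle_lt_trans; [apply one_sub_cos_le_sqr_half|].
replace ((PI / N) ^ 2 / 2) with (PI ^ 2 / (2 * N ^ 2)) by (field; lra).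
replace (128 / (25 * N ^ 2)) with ((256 / 25) / (2 * N ^ 2)) by (field; lra).
apply Rmult_lt_compat_r; [apply Rinv_0_lt_compat; nra | nra].
Qed.

Lemma cos_sqr_le_cos_sqr x y : 0 <= x -> x <= y -> y <= PI / 2 ->
  cos y ^ 2 <= cos x ^ 2.
Proof.
intros hx hxy hy.
assert (0 <= cos y) by (apply cos_ge_0; lra).
assert (cos y <= cos x) by (apply cos_decr_1; lra).
nra.
Qed.

Lemma cos_PI_div_sqr_ge_3_4 M : 6 <= M -> 3 / 4 <= cos (PI / M) ^ 2.
Proof.
intros hM. pose proof PI_RGT_0.
assert (0 < PI / M) by (apply Rdiv_lt_0_compat; lra).
assert (PI / M <= PI / 6) by (apply PI_div_le; lra).
apply Rle_trans with (cos (PI / 6) ^ 2); [|apply cos_sqr_le_cos_sqr; lra].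
rewrite cos_PI6.
assert (sqrt 3 * sqrt 3 = 3) by (apply sqrt_sqrt; lra).
nra.
Qed.

Lemma cos_PI_div_sqr_ge_1_2 M : 4 <= M -> 1 / 2 <= cos (PI / M) ^ 2.
Proof.
intros hM. pose proof PI_RGT_0.
assert (0 < PI / M) by (apply Rdiv_lt_0_compat; lra).
assert (PI / M <= PI / 4) by (apply PI_div_le; lra).
apply Rle_trans with (cos (PI / 4) ^ 2); [|apply cos_sqr_le_cos_sqr; lra].
rewrite cos_PI4.
assert (h2 : sqrt 2 * sqrt 2 = 2) by (apply sqrt_sqrt; lra).
assert (0 < sqrt 2) by (apply sqrt_lt_R0; lra).
replace ((1 / sqrt 2) ^ 2) with (1 / (sqrt 2 * sqrt 2)) by (field; lra).
rewrite h2. lra.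
Qed.

Lemma sqr_succ_le_cube N c : (5 <= N /\ 3 / 4 <= c) \/ (7 <= N /\ 1 / 2 <= c) ->
  64 * (N + 1) ^ 2 <= 25 * N ^ 3 * c.
Proof.
intros [[hN hc] | [hN hc]].
- assert (256 * (N + 1) ^ 2 <= 75 * N ^ 3).
  { set (t := N - 5). replace N with (5 + t) by (unfold t; ring).
    assert (0 <= t) by (unfold t; lra). nra. }
  assert (0 <= N ^ 3) by (apply pow_le; lra). nra.
- assert (128 * (N + 1) ^ 2 <= 25 * N ^ 3).
  { set (t := N - 7). replace N with (7 + t) by (unfold t; ring).
    assert (0 <= t) by (unfold t; lra). nra. }
  assert (0 <= N ^ 3) by (apply pow_le; lra). nra.
Qed.

Lemma one_sub_cos_PI_div_mul_lt N c :
  (5 <= N /\ 3 / 4 <= c) \/ (7 <= N /\ 1 / 2 <= c) ->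
  (1 - cos (PI / N)) * (N + 1) ^ 2 < 2 * N * c.
Proof.
intros hNc.
assert (hN : 5 <= N) by lra.
pose proof (sqr_succ_le_cube N c hNc).
apply Rlt_le_trans with (128 / (25 * N ^ 2) * (N + 1) ^ 2).
- apply Rmult_lt_compat_r; [nra|]. apply one_sub_cos_PI_div_lt; lra.
- apply (Rmult_le_reg_r (25 * N ^ 2)); [nra|]. field_simplify; nra.
Qed.

Lemma cosh_ln_lt x u d : 0 < x -> 0 < d -> d * (x + 1) ^ 2 < 2 * x * u ->
  cosh (ln x) < u / d - 1.
Proof.
intros hx hd hlt. rewrite cosh_ln by exact hx.
apply (Rmult_lt_reg_r (2 * x * d)); [nra|].
field_simplify; nra.
Qed.

Theorem proposition2 (n m : nat)
  (H : ((5 <= n)%nat /\ (6 <= m)%nat) \/ ((7 <= n)%nat /\ (4 <= m)%nat)) :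
  sin (PI / INR m) *
    cosh (arccosh (cos (PI / INR m) / sin (PI / INR n))
          + arccosh (cot (PI / INR m) * cot (PI / INR n)))
  > cosh (ln (INR n)).
Proof.
assert (hNM : (5 <= INR n /\ 6 <= INR m) \/ (7 <= INR n /\ 4 <= INR m)).
{ destruct H as [[hn hm] | [hn hm]]; [left | right];
    apply le_INR in hn, hm; simpl in hn, hm; lra. }
set (N := INR n) in *. set (M := INR m) in *.
pose proof PI_RGT_0.
assert (hN : 5 <= N) by lra. assert (hM : 4 <= M) by lra.
assert (0 < PI / M) by (apply Rdiv_lt_0_compat; lra).
assert (0 < PI / N) by (apply Rdiv_lt_0_compat; lra).
assert (PI / M <= PI / 4) by (apply PI_div_le; lra).
assert (PI / N <= PI / 5) by (apply PI_div_le; lra).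
rewrite sin_mul_cosh_arccosh_add by lra.
apply cosh_ln_lt; [lra | |].
- assert (cos (PI / N) < cos 0) by (apply cos_decreasing_1; lra).
  rewrite cos_0 in *. lra.
- apply one_sub_cos_PI_div_mul_lt.
  destruct hNM as [[hn hm] | [hn hm]]; [left | right]; split; try lra.
  + now apply cos_PI_div_sqr_ge_3_4.
  + now apply cos_PI_div_sqr_ge_1_2.
Qed.
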